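(* Consider neurons $i=1,\dots,n$ with weights $w_i\ge 0$ and continuous input functions $\beta_i:U\times\mathbb{R}^{i-1}\to\mathbb{R}$, and set $f_i(x_i,\langle u,x_1,\dots,x_{i-1}\rangle)=\tanh(w_i x_i+\beta_i(u,x_1,\dots,x_{i-1}))$. Fix $u\in U$, $i\in[n]$ and $x_1,\dots,x_i\in\mathbb{R}$, and define for every $j\in[i]$ the sequence $(x_{j,t})_{t\ge0}$ by $x_{j,0}=x_j$ and $x_{j,t}=f_j(x_{j,t-1},\langle u,x_{1,t-1},\dots,x_{j-1,t-1}\rangle)$ for $t\ge1$. Then the sequence $(x_{i,t})_{t\ge0}$ is convergent.
   Context: This is the sequence of states of the $i$-th neuron of an $\mathrm{RNC}_+$ when the same input $u$ is repeatedly applied from the state $\langle x_1,\dots,x_i\rangle$; denote it $\mathcal{S}_i(u,x_1,\dots,x_i)$. *)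

From HB Require Import structures.
From mathcomp Require Import all_boot all_order all_algebra.
From mathcomp Require Import all_classical all_reals all_analysis.
Unset Printing Implicit Defensive.
Import Order.TTheory GRing.Theory Num.Theory.
Import numFieldNormedType.Exports.
Local Open Scope ring_scope.

Definition tanh {R : realType} (x : R) : R :=
  (expR x - expR (- x)) / (expR x + expR (- x)).

(* neurons are indexed 0..n-1 (paper: 1..n); neuron j receives the
   states of neurons 0..j-1, a row vector of length j *)
Definition ordI {n} (i : 'I_n) (j : 'I_i.+1) : 'I_n :=
  Ordinal (leq_trans (ltn_ord j) (ltn_ord i)).
Definition ordL {m} (j : 'I_m) (k : 'I_j) : 'I_m :=
  Ordinal (ltn_trans (ltn_ord k) (ltn_ord j)).

Definition rnc_step {R : realType} {U : Type} {n : nat} (w : 'I_n -> R)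
  (beta : forall j : 'I_n, U * 'rV[R]_j -> R) (u : U) (i : 'I_n)
  (s : 'I_i.+1 -> R) : 'I_i.+1 -> R :=
  fun j => tanh (w (@ordI n i j) * s j
                 + beta (@ordI n i j) (u, \row_(k < j) s (@ordL i.+1 j k))).

Definition rnc_traj {R : realType} {U : Type} {n : nat} (w : 'I_n -> R)
  (beta : forall j : 'I_n, U * 'rV[R]_j -> R) (u : U) (i : 'I_n)
  (x : 'I_i.+1 -> R) (t : nat) : 'I_i.+1 -> R :=
  iter t (rnc_step w beta u i) x.

From HB Require Import structures.
From mathcomp Require Import all_boot all_order all_algebra.
From mathcomp Require Import all_classical all_reals all_analysis.
From mathcomp Require Import ring lra zify.
Import Order.TTheory GRing.Theory Num.Theory.
Import numFieldNormedType.Exports.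
Local Open Scope ring_scope.
Local Open Scope classical_set_scope.

(* By induction on the neurons, the inputs of neuron j converge once neurons 0..j-1 do,
   so it suffices that x_{t+1} = tanh (w x_t + b_t) converges when w >= 0 and b_t -> b.
   The steps are nondecreasing maps, so a point p strictly between liminf and limsup must
   be a fixed point of z |-> tanh (w z + b): otherwise the trajectory eventually stays on
   one side of p.  But fixed points satisfy (1 + z) / (1 - z) = e^(2(w z + b)), and three
   of them in arithmetic progression y - d, y, y + d force y = 0; the open interval
   (liminf, limsup), if nonempty, contains two such progressions with distinct centres. *)

Lemma recurrence_le_invariant {d} {T : porderType d} (f : nat -> T -> T) (x : nat -> T)
    (p : T) (t0 : nat) :
  (forall t, x t.+1 = f t (x t)) ->
  (forall t, (t0 <= t)%N -> {homo f t : a b / (a <= b)%O}) ->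
  (forall t, (t0 <= t)%N -> (f t p <= p)%O) ->
  (x t0 <= p)%O -> forall t, (t0 <= t)%N -> (x t <= p)%O.
Proof.
move=> x_rec f_homo f_p x_t0 t /subnKC <-; elim: (t - t0)%N => [|k IHk].
  by rewrite addn0.
rewrite addnS x_rec; apply: le_trans (f_p _ (leq_addr _ _)).
exact: f_homo (leq_addr _ _) _ _ IHk.
Qed.

Lemma recurrence_ge_invariant {d} {T : porderType d} (f : nat -> T -> T) (x : nat -> T)
    (p : T) (t0 : nat) :
  (forall t, x t.+1 = f t (x t)) ->
  (forall t, (t0 <= t)%N -> {homo f t : a b / (a <= b)%O}) ->
  (forall t, (t0 <= t)%N -> (p <= f t p)%O) ->
  (p <= x t0)%O -> forall t, (t0 <= t)%N -> (p <= x t)%O.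
Proof.
move=> x_rec f_homo.
exact: (@recurrence_le_invariant _ T^d f x p t0 x_rec (fun t ht a b ab => f_homo t ht b a ab)).
Qed.

Lemma cvg_row {K : puniformType} {T : Type} {F : set_system T} {FF : Filter F}
    {j : nat} {f : T -> 'I_j -> K} {l : 'I_j -> K} :
  (forall k, (fun t => f t k) @ F --> l k) ->
  (fun t => \row_k f t k) @ F --> (\row_k l k : 'rV[K]_j).
Proof.
move=> f_cvg; apply/cvg_mx_entourageP => A entA.
have : \forall t \near F, forall k, A (l k, f t k).
  by apply: filter_forall => k; move/cvg_entourageP: (f_cvg k); exact.
by apply: filterS => t Af i0 k; rewrite !mxE in_setE; exact: Af.
Qed.

Section Tanh.
Context {R : realType}.
Implicit Types (w b y z d : R).

Lemma tanhE z : tanh z = (expR z ^+ 2 - 1) / (expR z ^+ 2 + 1).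
Proof.
rewrite /tanh expRN.
have den : expR z ^+ 2 + 1 != 0 by rewrite gt_eqF // ltr_wpDl ?sqr_ge0.
by field; rewrite den gt_eqF ?expR_gt0.
Qed.

Lemma ler_tanh : {homo @tanh R : a c / a <= c}.
Proof.
move=> a c ac; rewrite !tanhE.
have sa_ge0 : 0 <= expR a ^+ 2 by rewrite sqr_ge0.
have sac : expR a ^+ 2 <= expR c ^+ 2.
  by rewrite ler_pXn2r ?nnegrE ?expR_ge0 // ler_expR.
rewrite ler_pdivrMr ?ltr_wpDl ?sqr_ge0 // mulrAC ler_pdivlMr ?ltr_wpDl ?sqr_ge0 //.
nra.
Qed.

Lemma tanh_norm_le1 z : `|tanh z| <= 1.
Proof.
rewrite tanhE ler_norml; set s := expR z ^+ 2.
have s_ge0 : 0 <= s by rewrite sqr_ge0.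
by rewrite ler_pdivlMr ?ler_pdivrMr; try lra.
Qed.

Lemma continuous_tanh : continuous (@tanh R).
Proof.
have cvg_expR (f : R -> R) z : f @ z --> f z -> (expR \o f) @ z --> expR (f z).
  by move=> f_cvg; apply: continuous_cvg => //; exact: continuous_expR.
move=> z; apply: cvgM; first apply: cvgB.
- exact: (cvg_expR id).
- by apply: (cvg_expR -%R); exact: cvgN.
apply: cvgV; first by rewrite gt_eqF // addr_gt0 ?expR_gt0.
apply: cvgD; first exact: (cvg_expR id).
by apply: (cvg_expR -%R); exact: cvgN.
Qed.

Lemma tanh_eq z y : tanh z = y -> expR z ^+ 2 * (1 - y) = 1 + y.
Proof.
rewrite tanhE => <-.
have den : expR z ^+ 2 + 1 != 0 by rewrite gt_eqF // ltr_wpDl ?sqr_ge0.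
by field.
Qed.

(* At a fixed point y, (1 + y) / (1 - y) = e^(2(w y + b)) is log-affine in y, so the
   three relations multiply out to 4 y d^2 = 0. *)
Lemma tanh_fixpoints_progression w b y d : d != 0 ->
  tanh (w * (y - d) + b) = y - d -> tanh (w * y + b) = y ->
  tanh (w * (y + d) + b) = y + d -> y = 0.
Proof.
move=> d_neq0 /tanh_eq fix1 /tanh_eq fix2 /tanh_eq fix3.
have exp_mid : expR (w * (y - d) + b) * expR (w * (y + d) + b)
             = expR (w * y + b) * expR (w * y + b).
  by rewrite -!expRD; congr expR; ring.
have : (1 + (y - d)) * (1 + (y + d)) * (1 - y) ^+ 2
     = (1 + y) ^+ 2 * (1 - (y - d)) * (1 - (y + d)).
  rewrite -fix1 -fix3 -fix2.
  transitivity ((expR (w * (y - d) + b) * expR (w * (y + d) + b)) ^+ 2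
                * (1 - (y - d)) * (1 - (y + d)) * (1 - y) ^+ 2); first by ring.
  by rewrite exp_mid; ring.
move=> /eqP; rewrite -subr_eq0.
have -> : (1 + (y - d)) * (1 + (y + d)) * (1 - y) ^+ 2
          - (1 + y) ^+ 2 * (1 - (y - d)) * (1 - (y + d)) = 4 * y * d ^+ 2 by ring.
by rewrite !mulf_eq0 (negbTE d_neq0) pnatr_eq0 /= orbF => /eqP.
Qed.

End Tanh.

Section TanhRecurrence.
Variables (R : realType) (w b0 : R) (b x : nat -> R).
Hypothesis w_ge0 : 0 <= w.
Hypothesis cvg_b : b @ \oo --> b0.
Hypothesis x_rec : forall t, x t.+1 = tanh (w * x t + b t).

Let liminf_x := sup (range (infs x)).
Let limsup_x := inf (range (sups x)).

Lemma tanh_recurrence_bounded t : `|x t| <= 1 + `|x 0|.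
Proof.
case: t => [|t]; first by rewrite lerDr.
by rewrite x_rec (le_trans (tanh_norm_le1 _)) // lerDl.
Qed.

Let x_ub : has_ubound (range x).
Proof.
exists (1 + `|x 0|) => _ [t _ <-].
exact: le_trans (ler_norm _) (tanh_recurrence_bounded t).
Qed.

Let x_lb : has_lbound (range x).
Proof.
exists (- (1 + `|x 0|)) => _ [t _ <-].
rewrite lerNl (le_trans _ (tanh_recurrence_bounded t)) // -normrN.
exact: ler_norm.
Qed.

Let cvg_infs_x : infs x @ \oo --> liminf_x.
Proof. exact: cvg_infs_sup. Qed.

Let cvg_sups_x : sups x @ \oo --> limsup_x.
Proof. exact: cvg_sups_inf. Qed.

Let infs_le n : infs x n <= x n.
Proof. by apply: ge_inf; [exact: has_lbound_sdrop | exists n => /=]. Qed.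

Let le_sups n : x n <= sups x n.
Proof. by apply: ub_le_sup; [exact: has_ubound_sdrop | exists n => /=]. Qed.

Let le_liminf p T : (forall t, (T <= t)%N -> p <= x t) -> p <= liminf_x.
Proof.
move=> x_ge; apply: (ler_cvg_to (cvg_cst p) cvg_infs_x); exists T => // n Tn.
apply: lb_le_inf; first by exists (x n), n => /=.
by move=> _ [k /= nk <-]; apply: x_ge; exact: leq_trans nk.
Qed.

Let limsup_le p T : (forall t, (T <= t)%N -> x t <= p) -> limsup_x <= p.
Proof.
move=> x_le; apply: (ler_cvg_to cvg_sups_x (cvg_cst p)); exists T => // n Tn.
apply: ge_sup; first by exists (x n), n => /=.
by move=> _ [k /= nk <-]; apply: x_le; exact: leq_trans nk.
Qed.

Let step_homo t : {homo (fun z => tanh (w * z + b t)) : a c / a <= c}.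
Proof. by move=> a c ac; apply: ler_tanh; rewrite lerD2r ler_wpM2l. Qed.

Let trapped_below p T : (forall t, (T <= t)%N -> tanh (w * p + b t) <= p) ->
  limsup_x <= p \/ p <= liminf_x.
Proof.
move=> step_le.
have [[t0 [Tt0 xt0]]|never_le] := pselect (exists t0, (T <= t0)%N /\ x t0 <= p).
  left; apply: (limsup_le _ t0).
  apply: (recurrence_le_invariant (fun t z => tanh (w * z + b t))) => // t t0t.
  exact: step_le (leq_trans Tt0 t0t).
right; apply: (le_liminf _ T) => t Tt; rewrite leNgt; apply/negP => xt_lt.
by apply: never_le; exists t; split => //; exact: ltW.
Qed.

Let trapped_above p T : (forall t, (T <= t)%N -> p <= tanh (w * p + b t)) ->
  limsup_x <= p \/ p <= liminf_x.
Proof.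
move=> step_ge.
have [[t0 [Tt0 xt0]]|never_ge] := pselect (exists t0, (T <= t0)%N /\ p <= x t0).
  right; apply: (le_liminf _ t0).
  apply: (recurrence_ge_invariant (fun t z => tanh (w * z + b t))) => // t t0t.
  exact: step_ge (leq_trans Tt0 t0t).
left; apply: (limsup_le _ T) => t Tt; rewrite leNgt; apply/negP => xt_gt.
by apply: never_ge; exists t; split => //; exact: ltW.
Qed.

Let fixpoint_between p : liminf_x < p < limsup_x -> tanh (w * p + b0) = p.
Proof.
move=> /andP[Lp pM].
have cvg_step : (fun t => tanh (w * p + b t)) @ \oo --> tanh (w * p + b0).
  apply: continuous_cvg; first exact: continuous_tanh.
  exact: cvgD (cvg_cst _) cvg_b.
have not_trapped : ~ (limsup_x <= p \/ p <= liminf_x).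
  by case; rewrite leNgt ?pM ?Lp.
have [lt_p|gt_p|//] := ltgtP (tanh (w * p + b0)) p.
- have [T _ step_lt] := cvgr_lt _ cvg_step _ lt_p.
  by case: not_trapped; apply: (trapped_below _ T) => t Tt; exact/ltW/step_lt.
- have [T _ step_gt] := cvgr_gt _ cvg_step _ gt_p.
  by case: not_trapped; apply: (trapped_above _ T) => t Tt; exact/ltW/step_gt.
Qed.

(* Split (liminf, limsup) into eight parts: y = liminf + 2d and y = liminf + 6d are
   centres of progressions of fixed points, and they cannot both vanish. *)
Let liminf_eq_limsup : liminf_x = limsup_x.
Proof.
have L_le_M : liminf_x <= limsup_x.
  apply: (ler_cvg_to cvg_infs_x cvg_sups_x); apply: nearW => n.
  exact: le_trans (le_sups n).
apply/eqP; rewrite eq_le L_le_M /= leNgt; apply/negP => L_lt_M.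
pose d := (limsup_x - liminf_x) / 8.
have d_gt0 : 0 < d by rewrite divr_gt0 // subr_gt0.
have M_def : limsup_x = liminf_x + 8 * d by rewrite /d; field.
have fixed k : (0 < k < 8)%N ->
    tanh (w * (liminf_x + k%:R * d) + b0) = liminf_x + k%:R * d.
  move=> /andP[k_gt0 k_lt8]; apply: fixpoint_between; apply/andP; split.
    by rewrite ltrDl mulr_gt0 // ltr0n.
  by rewrite M_def ltrD2l ltr_pM2r // ltr_nat.
have shift k : liminf_x + k.+1%:R * d = liminf_x + k%:R * d + d.
  by rewrite -natr1 mulrDl mul1r addrA.
have centre0 k : (0 < k < 6)%N -> liminf_x + k.+1%:R * d = 0.
  move=> k_bounds.
  apply: (tanh_fixpoints_progression w b0 _ d); first exact: lt0r_neq0.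
  - by rewrite shift addrK fixed //; lia.
  - by rewrite fixed //; lia.
  - by rewrite -shift fixed //; lia.
have := centre0 1%N isT; have := centre0 5%N isT; lra.
Qed.

Lemma tanh_recurrence_cvg : exists l : R, x @ \oo --> l.
Proof.
exists limsup_x; apply: (squeeze_cvgr (f := infs x) (h := sups x)).
- by apply: nearW => n; rewrite infs_le le_sups.
- by rewrite -liminf_eq_limsup.
- exact: cvg_sups_x.
Qed.

End TanhRecurrence.

Section Network.
Variables (R : realType) (U : topologicalType) (n : nat).
Variables (w : 'I_n -> R) (beta : forall j : 'I_n, U * 'rV[R]_j -> R).
Hypothesis w_ge0 : forall j, 0 <= w j.
Hypothesis beta_cont : forall j, continuous (beta j).
Variables (u : U) (i : 'I_n) (x : 'I_i.+1 -> R).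

Let traj := rnc_traj w beta u i x.

Lemma rnc_trajS t (j : 'I_i.+1) : traj t.+1 j =
  tanh (w (ordI i j) * traj t j + beta (ordI i j) (u, \row_(k < j) traj t (ordL j k))).
Proof. by rewrite /traj /rnc_traj iterS. Qed.

Lemma rnc_traj_cvg (j : 'I_i.+1) : exists l : R, (fun t => traj t j) @ \oo --> l.
Proof.
move: {2}(nat_of_ord j) (erefl (nat_of_ord j)) => m; elim/ltn_ind: m j => m IHm j j_m.
have inputs_cvg (k : 'I_j) : exists l : R, (fun t => traj t (ordL j k)) @ \oo --> l.
  by apply: (IHm k) => //; rewrite -j_m.
have [l cvg_l] := choice inputs_cvg.
have cvg_input : (fun t => beta (ordI i j) (u, \row_k traj t (ordL j k))) @ \oo
    --> beta (ordI i j) (u, \row_k l k).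
  apply: continuous_cvg; first exact: beta_cont.
  exact: cvg_pair (cvg_cst u) (cvg_row cvg_l).
exact: tanh_recurrence_cvg (w_ge0 (ordI i j)) cvg_input (rnc_trajS ^~ j).
Qed.

End Network.

Theorem proposition4 (R : realType) (U : topologicalType) (n : nat)
  (w : 'I_n -> R) (beta : forall j : 'I_n, U * 'rV[R]_j -> R)
  (hw : forall j, 0 <= w j) (hbeta : forall j, continuous (beta j))
  (u : U) (i : 'I_n) (x : 'I_i.+1 -> R) :
  exists l : R, (fun t => rnc_traj w beta u i x t ord_max) @ \oo --> l.
Proof. exact: rnc_traj_cvg. Qed.
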